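(* Let $A$ be a finite set, let $X,Y$ be upward closed subsets of $(A^*,\le_e)$, and let $a\in A$. Then: (1) $X \subseteq a^{-1}X$. (2) If $a \in \operatorname{Som}(X)$, then $X \subsetneq a^{-1}X$. (3) If $X \neq A^*$ and for all $b\in\operatorname{Som}(X)$ we have $b^{-1}X \subseteq b^{-1}Y$, then $X\subseteq Y$.
   Context: $A^*$ is the set of finite words over $A$. The embedding order $\le_e$ is defined by recursion on the length of $x$: the empty word satisfies $\emptyset \le_e y$ for all $y$; if $x = au$ with $a\in A$, $u\in A^*$, then $x\le_e y$ iff there are $v,w\in A^*$ with $y=vaw$ and $u\le_e w$. A subset $X$ is upward closed if $x\in X$, $x\le_e y$ imply $y\in X$. For $X\subseteq A^*$ and $a\in A$, $a^{-1}X := \{y\in A^* \mid ay\in X\}$, and $\operatorname{Som}(X) := \{a\in A \mid \exists u\in A^*: au \text{ is a minimal element of } X \text{ with respect to } \le_e\}$. *)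

From mathcomp Require Import all_boot.
Set Implicit Arguments. Unset Strict Implicit. Unset Printing Implicit Defensive.

Fixpoint emb {A : Type} (x y : seq A) : Prop :=
  match x with
  | [::] => True
  | a :: u => exists v w, y = v ++ a :: w /\ emb u w
  end.

Definition upward_closed {A : Type} (X : seq A -> Prop) : Prop :=
  forall x y, X x -> emb x y -> X y.

Definition lquot {A : Type} (a : A) (X : seq A -> Prop) : seq A -> Prop :=
  fun y => X (a :: y).

Definition minimal_in {A : Type} (X : seq A -> Prop) (x : seq A) : Prop :=
  X x /\ forall y, X y -> emb y x -> emb x y.

Definition Som {A : Type} (X : seq A -> Prop) : A -> Prop :=
  fun a => exists u, minimal_in X (a :: u).

Definition subset_of {A : Type} (X Y : seq A -> Prop) : Prop :=
  forall x, X x -> Y x.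

From mathcomp Require Import all_boot.
From Stdlib Require Import Classical.
Set Implicit Arguments. Unset Strict Implicit.

(* For (2), if a u is minimal in X then u is not in X, for otherwise
   the minimality of a u would make a u embed into the shorter word u.  For
   (3), every x in X lies above some minimal element m of X (induction on
   the length of x); m is not empty as X is not all of A^*, so m = b u with
   b in Som(X), whence u is in b^{-1} X, hence in b^{-1} Y, and x is in Y. *)

Section Embedding.

Variable A : Type.
Implicit Types (a c : A) (x y z u v w : seq A).

Lemma emb_refl x : emb x x.
Proof. by elim: x => //= a u IHu; exists [::], u. Qed.

Lemma emb_consr c x y : emb x y -> emb x (c :: y).
Proof. by case: x => //= a u [v [w [-> Euw]]]; exists (c :: v), w. Qed.

Lemma size_emb x y : emb x y -> size x <= size y.
Proof.
elim: x y => //= a u IHu y [v [w [-> Euw]]].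
by rewrite size_cat /= addnS ltnS (leq_trans (IHu w Euw)) ?leq_addl.
Qed.

Lemma emb_size_eq x y : emb x y -> size x = size y -> x = y.
Proof.
elim: x y => [|a u IHu] y /=; first by case: y.
move=> [[|c v] [w [-> Euw]]] /= [Esize]; first by rewrite (IHu w).
by move: (size_emb Euw); rewrite Esize size_cat /= addnS ltnNge leq_addl.
Qed.

Lemma emb_cat_suffix v x z :
  emb (v ++ x) z -> exists z1 z2, z = z1 ++ z2 /\ emb x z2.
Proof.
elim: v z => [|c v IHv] z /=; first by exists [::], z.
move=> [p [q [-> Evq]]].
have [q1 [q2 [-> Exq2]]] := IHv q Evq.
by exists (p ++ c :: q1), q2; rewrite -catA.
Qed.

Lemma emb_trans y x z : emb x y -> emb y z -> emb x z.
Proof.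
elim: x y z => //= a u IHu y z [v [w [-> Euw]]] /emb_cat_suffix.
move=> [z1 [_ [-> [p [q [-> Ewq]]]]]].
by exists (z1 ++ p), q; rewrite catA; split; last exact: IHu Euw Ewq.
Qed.

End Embedding.

Section UpwardClosed.

Variables (A : Type) (X : seq A -> Prop).

Lemma exists_minimal_emb x : X x -> exists m, minimal_in X m /\ emb m x.
Proof.
elim: {x}(size x).+1 {-2}x (ltnSn (size x)) => // n IHn x lt_x_n Xx.
have [[y [Xy [Eyx not_Exy]]] | no_below] :=
  classic (exists y, X y /\ emb y x /\ ~ emb x y).
- have lt_y_x : size y < size x.
    rewrite ltn_neqAle size_emb // andbT.
    apply/eqP => /(emb_size_eq Eyx) y_eq_x.
    by apply: not_Exy; rewrite y_eq_x; exact: emb_refl.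
  have [m [minXm Emy]] := IHn y (leq_trans lt_y_x lt_x_n) Xy.
  by exists m; split; last exact: emb_trans Emy Eyx.
- exists x; split; last exact: emb_refl.
  split=> // y Xy Eyx; apply: NNPP => not_Exy.
  by apply: no_below; exists y.
Qed.

Lemma Som_lquot_not_sub a : Som X a -> exists y, lquot a X y /\ ~ X y.
Proof.
move=> [u [Xau minXau]]; exists u; split=> // Xu.
have := size_emb (minXau u Xu (emb_consr a (emb_refl u))).
by rewrite /= ltnn.
Qed.

Hypothesis upX : upward_closed X.

Lemma upward_closed_sub_lquot a : subset_of X (lquot a X).
Proof. by move=> x Xx; apply: upX Xx _; apply/emb_consr/emb_refl. Qed.

Lemma upward_closed_nil : X [::] -> forall w, X w.
Proof. by move=> Xnil w; apply: upX Xnil _. Qed.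

Lemma upward_closed_sub_Som (Y : seq A -> Prop) :
  upward_closed Y -> (exists w, ~ X w) ->
  (forall b, Som X b -> subset_of (lquot b X) (lquot b Y)) ->
  subset_of X Y.
Proof.
move=> upY [w not_Xw] SomXY x Xx.
have [[|b u] [[Xm minXm] Emx]] := exists_minimal_emb Xx.
  by case: not_Xw; apply: upward_closed_nil.
have SomXb : Som X b by exists u.
exact: upY (SomXY b SomXb u Xm) Emx.
Qed.

End UpwardClosed.

Theorem lemma5p1 (A : finType) (X Y : seq A -> Prop) (a : A) :
  upward_closed X -> upward_closed Y ->
  [/\ subset_of X (lquot a X),
      (Som X a -> subset_of X (lquot a X) /\ exists y, lquot a X y /\ ~ X y)
    & ((exists w, ~ X w) ->
       (forall b, Som X b -> subset_of (lquot b X) (lquot b Y)) ->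
       subset_of X Y)].
Proof.
move=> upX upY; split.
- exact: upward_closed_sub_lquot.
- by move=> SomXa; split; [exact: upward_closed_sub_lquot | exact: Som_lquot_not_sub].
- exact: upward_closed_sub_Som.
Qed.
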